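(* Let $\mathcal K$ be a 2-category, $(t,\mu,\eta)$ a monad on a 0-cell $k$ and $s:k\to k$ a 1-cell. There is a bijective correspondence between (i) monads in the 2-category $\mathrm{EM}^w(\mathcal K)$ on the 0-cell $(t,\mu,\eta)$ whose underlying 1-cell has first component $s$, i.e. triples consisting of a 1-cell $(s,\psi):t\to t$ of $\mathrm{EM}^w(\mathcal K)$, a multiplication 2-cell $\nu:(s,\psi)\circ(s,\psi)\Rightarrow(s,\psi)$ and a unit 2-cell $\vartheta:(k,t)\Rightarrow(s,\psi)$ in $\mathrm{EM}^w(\mathcal K)$ (so $\nu:ss\Rightarrow st$ and $\vartheta:k\Rightarrow st$ in $\mathcal K$) satisfying the monad axioms; and (ii) pre-monads $(st,\Theta,\vartheta)$ in $\mathcal K$ (with the same unit $\vartheta$) such that $\Theta\ast sts\mu=s\mu\ast\Theta t$.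
   Context: Conventions in a 2-category $\mathcal K$: horizontal composition and whiskering by juxtaposition in the order of functor composition; identity 1-cell of $k$ written $k$, identity 2-cell of $V$ written $V$; vertical composition $\ast$ with $\alpha\ast\beta$ meaning $\beta$ then $\alpha$. A monad $(t,\mu,\eta)$ on $k$: $t:k\to k$, $\mu:tt\Rightarrow t$, $\eta:k\Rightarrow t$ with $\mu\ast\mu t=\mu\ast t\mu$, $\mu\ast\eta t=t=\mu\ast t\eta$. A pre-monad is a triple $(m,M,e)$, $m:k\to k$, $M:mm\Rightarrow m$, $e:k\Rightarrow m$, with $M\ast Mm=M\ast mM$, $M\ast em=M\ast me$, $M\ast ee=e$, $M\ast Mm\ast emm=M$. The 2-category $\mathrm{EM}^w(\mathcal K)$: 0-cells are monads in $\mathcal K$; a 1-cell $(t,\mu,\eta)\to(t',\mu',\eta')$ ($t$ on $k$, $t'$ on $k'$) is $(V,\psi)$, $V:k\to k'$, $\psi:t'V\Rightarrow Vt$, with $V\mu\ast\psi t\ast t'\psi=\psi\ast\mu'V$; a 2-cell $(V,\psi)\Rightarrow(W,\phi)$ is $\varrho:V\Rightarrow Wt$ in $\mathcal K$ with $W\mu\ast\varrho t\ast\psi=W\mu\ast\phi t\ast t'\varrho$ and $\varrho=W\mu\ast\phi t\ast\eta'Wt\ast\varrho$. Identity 1-cell on $t$ is $(k,t)$; identity 2-cell on $(W,\phi)$ is $\phi\ast\eta'W$; horizontal composite of 1-cells $(V,\psi):t\to t'$, $(V',\psi'):t'\to t''$ is $(V'V,V'\psi\ast\psi'V)$, of 2-cells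 $\varrho:(V,\psi)\Rightarrow(W,\phi)$, $\varrho':(V',\psi')\Rightarrow(W',\phi')$ is $\varrho'\circ\varrho=W'W\mu\ast W'\varrho t\ast W'\psi\ast\varrho'V$; vertical composite of $\varrho$ and $\tau:(W,\phi)\Rightarrow(U,\theta)$ is $\tau\bullet\varrho=U\mu\ast\tau t\ast\varrho$. These data form a 2-category, in which monads (a 1-cell $m:t\to t$ with 2-cells $\nu:m\circ m\Rightarrow m$, $\vartheta:1_t\Rightarrow m$ satisfying associativity and unit laws w.r.t. $\circ$ and $\bullet$) are meant in (i). *)

(* a strict 2-category presented as an essentially-algebraic
   (untyped) structure: 1-cells and 2-cells carry source/target maps and the
   composition operations are total, with axioms required only on composable
   data.  This avoids transports along strict associativity of 1-cells. *)

Record TwoCat := {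
  Ob : Type;
  H1 : Type;
  C2 : Type;
  dom : H1 -> Ob;
  cod : H1 -> Ob;
  id1 : Ob -> H1;
  comp1 : H1 -> H1 -> H1;           (* comp1 g f = g f  (f first, then g) *)
  src : C2 -> H1;
  tgt : C2 -> H1;
  id2 : H1 -> C2;
  vcomp : C2 -> C2 -> C2;           (* vcomp a b = a * b  (b first, then a) *)
  hcomp : C2 -> C2 -> C2;           (* hcomp a' a = a' a  (a first, then a') *)
  dom_id1 : forall x, dom (id1 x) = x;
  cod_id1 : forall x, cod (id1 x) = x;
  dom_comp1 : forall f g, cod f = dom g -> dom (comp1 g f) = dom f;
  cod_comp1 : forall f g, cod f = dom g -> cod (comp1 g f) = cod g;
  comp1_assoc : forall f g h, cod f = dom g -> cod g = dom h ->
      comp1 h (comp1 g f) = comp1 (comp1 h g) f;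
  comp1_id_l : forall f, comp1 (id1 (cod f)) f = f;
  comp1_id_r : forall f, comp1 f (id1 (dom f)) = f;
  cell_dom : forall a, dom (src a) = dom (tgt a);
  cell_cod : forall a, cod (src a) = cod (tgt a);
  src_id2 : forall f, src (id2 f) = f;
  tgt_id2 : forall f, tgt (id2 f) = f;
  src_vcomp : forall a b, src a = tgt b -> src (vcomp a b) = src b;
  tgt_vcomp : forall a b, src a = tgt b -> tgt (vcomp a b) = tgt a;
  vcomp_assoc : forall a b c, src a = tgt b -> src b = tgt c ->
      vcomp a (vcomp b c) = vcomp (vcomp a b) c;
  vcomp_id_l : forall a, vcomp (id2 (tgt a)) a = a;
  vcomp_id_r : forall a, vcomp a (id2 (src a)) = a;
  src_hcomp : forall a' a, cod (src a) = dom (src a') ->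
      src (hcomp a' a) = comp1 (src a') (src a);
  tgt_hcomp : forall a' a, cod (src a) = dom (src a') ->
      tgt (hcomp a' a) = comp1 (tgt a') (tgt a);
  hcomp_assoc : forall a b c, cod (src a) = dom (src b) -> cod (src b) = dom (src c) ->
      hcomp c (hcomp b a) = hcomp (hcomp c b) a;
  hcomp_id_l : forall a, hcomp (id2 (id1 (cod (src a)))) a = a;
  hcomp_id_r : forall a, hcomp a (id2 (id1 (dom (src a)))) = a;
  hcomp_id2 : forall f g, cod f = dom g -> hcomp (id2 g) (id2 f) = id2 (comp1 g f);
  interchange : forall a b a' b', src a = tgt b -> src a' = tgt b' ->
      cod (src b) = dom (src b') ->
      hcomp (vcomp a' b') (vcomp a b) = vcomp (hcomp a' a) (hcomp b' b)
}.

Set Implicit Arguments.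
Unset Strict Implicit.

Section Defs.
Variable K : TwoCat.

(* whiskering:  wl f a = "f a",  wr a f = "a f" *)
Definition wl (f : H1 K) (a : C2 K) : C2 K := hcomp K (id2 K f) a.
Definition wr (a : C2 K) (f : H1 K) : C2 K := hcomp K a (id2 K f).
Definition c1 (g f : H1 K) : H1 K := comp1 K g f.
Definition vc (a b : C2 K) : C2 K := vcomp K a b.

Definition Cell2 (a : C2 K) (f g : H1 K) : Prop := src K a = f /\ tgt K a = g.

Definition is_monad (k : Ob K) (t : H1 K) (mu eta : C2 K) : Prop :=
  (dom K t = k /\ cod K t = k /\
      Cell2 mu (c1 t t) t /\ Cell2 eta (id1 K k) t
  /\       vc mu (wr mu t) = vc mu (wl t mu)
      /\ vc mu (wr eta t) = id2 K t /\ vc mu (wl t eta) = id2 K t).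

Definition is_premonad (k : Ob K) (m : H1 K) (M e : C2 K) : Prop :=
  (dom K m = k /\ cod K m = k /\
      Cell2 M (c1 m m) m /\ Cell2 e (id1 K k) m
  /\       vc M (wr M m) = vc M (wl m M)
      /\ vc M (wr e m) = vc M (wl m e)
      /\ vc M (hcomp K e e) = e
      /\ vc (vc M (wr M m)) (wr e (c1 m m)) = M).

Definition em_1cell (k k' : Ob K) (t : H1 K) (mu : C2 K) (t' : H1 K) (mu' : C2 K) (V : H1 K) (psi : C2 K) : Prop :=
  (dom K V = k /\ cod K V = k' /\ Cell2 psi (c1 t' V) (c1 V t)
  /\       vc (vc (wl V mu) (wr psi t)) (wl t' psi) = vc psi (wr mu' V)).

Definition em_2cell (t : H1 K) (mu : C2 K) (t' : H1 K) (eta' : C2 K) (V : H1 K) (psi : C2 K) (W : H1 K) (phi : C2 K)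
    (rho : C2 K) : Prop :=
  (Cell2 rho V (c1 W t) /\
      vc (vc (wl W mu) (wr rho t)) psi = vc (vc (wl W mu) (wr phi t)) (wl t' rho)
  /\       rho = vc (vc (vc (wl W mu) (wr phi t)) (wr eta' (c1 W t))) rho).

Definition em_id2 (eta' : C2 K) (W : H1 K) (phi : C2 K) : C2 K := vc phi (wr eta' W).

Definition em_vcomp (t : H1 K) (mu : C2 K) (U : H1 K) (tau rho : C2 K) : C2 K :=
  vc (vc (wl U mu) (wr tau t)) rho.

Definition em_hcomp (t : H1 K) (mu : C2 K) (V : H1 K) (psi : C2 K) (W W' : H1 K) (rho' rho : C2 K) : C2 K :=
  vc (vc (vc (wl (c1 W' W) mu) (wl W' (wr rho t))) (wl W' psi)) (wr rho' V).

Definition EMw_monad (k : Ob K) (t : H1 K) (mu eta : C2 K) (s : H1 K) (x : C2 K * C2 K * C2 K) : Prop :=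
  let '(psi, nu, th) := x in
  let ss := c1 s s in
  let psi_ss := vc (wl s psi) (wr psi s) in     (* (s,psi) o (s,psi) = (ss, s psi * psi s) *)
  let idm := em_id2 eta s psi in
  em_1cell k k t mu t mu s psi
  /\ em_2cell t mu t eta ss psi_ss s psi nu
  /\ em_2cell t mu t eta (id1 K k) (id2 K t) s psi th
  /\ em_vcomp t mu s nu (em_hcomp t mu s psi s s nu idm)
     = em_vcomp t mu s nu (em_hcomp t mu ss psi_ss s s idm nu)
  /\ em_vcomp t mu s nu (em_hcomp t mu s psi s s th idm) = idm
  /\ em_vcomp t mu s nu (em_hcomp t mu (id1 K k) (id2 K t) s s idm th) = idm.

Definition st_premonad (k : Ob K) (t : H1 K) (mu : C2 K) (s : H1 K) (y : C2 K * C2 K) : Prop :=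
  let '(Th, th) := y in
  is_premonad k (c1 s t) Th th
  /\ vc Th (wl (c1 (c1 s t) s) mu) = vc (wl s mu) (wr Th t).

End Defs.

From Stdlib Require Import List ProofIrrelevance.
Import ListNotations.
Set Implicit Arguments.

(* A monad structure (psi, nu, vartheta) on (s, psi) in EM^w(K) yields
     Theta := s mu * s mu t * nu t t * s psi t : stst => st,
   and (st, Theta, vartheta) is a pre-monad with Theta * sts mu = s mu * Theta t.
   Conversely a pre-monad gives back
     psi = Theta * (s mu * vartheta t) st * ts eta   and   nu = Theta * s eta st * ss eta.
   The two constructions are mutually inverse because 2-cells of EM^w(K) into (s, psi)
   are fixed by rho |-> s mu * psi t * eta st * rho.  Every identity involved is an
   equation between string diagrams in the generators mu, eta, psi, nu, vartheta, Theta
   over the 1-cells s and t: composites of whiskered generators are read as lists of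
   layers, and two lists are identified by interchange moves and by rewriting with
   the axioms, each move being checked by computation. *)

(** * String diagrams over the 1-cells s and t *)

Inductive letter := LS | LT.
Scheme Equality for letter.

Notation word := (list letter).
Definition word_eq_dec : forall u v : word, {u = v} + {u <> v} := list_eq_dec letter_eq_dec.

Inductive gen := Mu | Eta | Psi | Nu | Vartheta | Theta.
Scheme Equality for gen.

Definition gen_dom (g : gen) : word :=
  match g with
  | Mu => [LT;LT] | Eta => [] | Psi => [LT;LS] | Nu => [LS;LS]
  | Vartheta => [] | Theta => [LS;LT;LS;LT]
  end.
Definition gen_cod (g : gen) : word :=
  match g with
  | Mu => [LT] | Eta => [LT] | Psi => [LS;LT] | Nu => [LS;LT]
  | Vartheta => [LS;LT] | Theta => [LS;LT]
  end.

(* [(L, g, R)] stands for the whiskered generator [L g R], words being written in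
   juxtaposition order ([[LT;LS]] is ts); a diagram is the list of its layers,
   from the source (first) to the target (last). *)
Definition layer := (word * gen * word)%type.

Definition layer_eq_dec (x y : layer) : {x = y} + {x <> y}.
Proof.
  destruct x as [[L1 g1] R1], y as [[L2 g2] R2].
  destruct (word_eq_dec L1 L2), (gen_eq_dec g1 g2), (word_eq_dec R1 R2);
    [left; congruence | right; congruence ..].
Defined.

Definition ldom (x : layer) : word := let '(L, g, R) := x in L ++ gen_dom g ++ R.
Definition lcod (x : layer) : word := let '(L, g, R) := x in L ++ gen_cod g ++ R.

Fixpoint diag_cod (u : word) (D : list layer) : option word :=
  match D with
  | [] => Some u
  | x :: D' => if word_eq_dec u (ldom x) then diag_cod (lcod x) D' else None
  end.

Fixpoint strip_prefix (p l : word) : option word :=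
  match p, l with
  | [], _ => Some l
  | a :: p', b :: l' => if letter_eq_dec a b then strip_prefix p' l' else None
  | _, _ => None
  end.

Lemma strip_prefix_app p l m : strip_prefix p l = Some m -> l = p ++ m.
Proof.
  revert l; induction p as [|a p IH]; intros [|b l]; simpl; try congruence.
  destruct (letter_eq_dec a b) as [<-|]; [|discriminate].
  intro E; rewrite (IH _ E); reflexivity.
Qed.

(* Interchange of two consecutive layers acting on disjoint parts of the word. *)
Definition swap_layers (x y : layer) : option (layer * layer) :=
  let '(L1, g1, R1) := x in let '(L2, g2, R2) := y in
  match strip_prefix (L1 ++ gen_cod g1) L2 with
  | Some m =>
      if word_eq_dec R1 (m ++ gen_dom g2 ++ R2)
      then Some ((L1 ++ gen_dom g1 ++ m, g2, R2), (L1, g1, m ++ gen_cod g2 ++ R2))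
      else None
  | None =>
      match strip_prefix (L2 ++ gen_dom g2) L1 with
      | Some m =>
          if word_eq_dec R2 (m ++ gen_cod g1 ++ R1)
          then Some ((L2, g2, m ++ gen_dom g1 ++ R1), (L2 ++ gen_cod g2 ++ m, g1, R1))
          else None
      | None => None
      end
  end.

Fixpoint swap_at (n : nat) (D : list layer) : option (list layer) :=
  match n, D with
  | 0, x :: y :: D' =>
      match swap_layers x y with Some (y', x') => Some (y' :: x' :: D') | None => None end
  | S n', x :: D' =>
      match swap_at n' D' with Some D'' => Some (x :: D'') | None => None end
  | _, _ => None
  end.

Fixpoint swaps (ns : list nat) (D : list layer) : option (list layer) :=
  match ns with
  | [] => Some D
  | n :: ns' => match swap_at n D with Some D' => swaps ns' D' | None => None end
  end.

Definition whisk (L R : word) (x : layer) : layer :=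
  let '(L0, g, R0) := x in (L ++ L0, g, R0 ++ R).

Definition replace_at (u : word) (n : nat) (L R u0 : word) (E1 E2 D : list layer)
    : option (list layer) :=
  let P := firstn n D in
  let M := firstn (length E1) (skipn n D) in
  let Q := skipn (length E1) (skipn n D) in
  match diag_cod u P with
  | Some u1 =>
      if word_eq_dec u1 (L ++ u0 ++ R) then
        if list_eq_dec layer_eq_dec M (map (whisk L R) E1)
        then Some (P ++ map (whisk L R) E2 ++ Q) else None
      else None
  | None => None
  end.

(* Untrusted search for swap and rewrite plans: every plan is checked by the
   soundness lemmas [diag_eq_swaps] and [diag_eq_rewrite] below. *)

Fixpoint down_swaps (j p : nat) : list nat :=
  match p with 0 => [] | S p' => if Nat.leb p j then [] else p' :: down_swaps j p' end.

Definition default_layer : layer := ([], Mu, []).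

Fixpoint bring_down_aux (D : list layer) (j p : nat) (target : layer) (fuel : nat)
    : option (list nat * list layer) :=
  match fuel with
  | 0 => None
  | S fuel' =>
      let pl := down_swaps j p in
      match swaps pl D with
      | Some D' =>
          if layer_eq_dec (nth j D' default_layer) target then Some (pl, D')
          else bring_down_aux D j (S p) target fuel'
      | None => bring_down_aux D j (S p) target fuel'
      end
  end.
Definition bring_down D j target := bring_down_aux D j j target (length D - j).

Fixpoint gather (D : list layer) (j : nat) (L R : word) (es : list layer)
    : option (list nat * list layer) :=
  match es with
  | [] => Some ([], D)
  | e :: es' =>
      match bring_down D j (whisk L R e) with
      | Some (pl, D') =>
          match gather D' (S j) L R es' with
          | Some (pl2, D'') => Some (pl ++ pl2, D'')
          | None => None
          end
      | None => None
      end
  end.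

Definition match_first (x e : layer) : option (word * word) :=
  let '(L0, g, R0) := x in let '(Le, ge, Re) := e in
  if gen_eq_dec g ge then
    match strip_prefix (rev Le) (rev L0), strip_prefix Re R0 with
    | Some m, Some R => Some (rev m, R)
    | _, _ => None
    end
  else None.

Fixpoint find_plan_aux (E1 D : list layer) (i fuel : nat)
    : option (list nat * nat * word * word) :=
  match fuel, E1 with
  | S fuel', e1 :: es =>
      match match_first (nth i D default_layer) e1 with
      | Some (L, R) =>
          match gather D (S i) L R es with
          | Some (pl, _) => Some (pl, i, L, R)
          | None => find_plan_aux E1 D (S i) fuel'
          end
      | None => find_plan_aux E1 D (S i) fuel'
      end
  | _, _ => None
  end.
Definition find_plan E1 D := find_plan_aux E1 D 0 (length D).

Fixpoint align_aux (D Dt : list layer) (j fuel : nat) : option (list nat) :=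
  match fuel with
  | 0 => Some []
  | S fuel' =>
      match nth_error Dt j with
      | None => Some []
      | Some x =>
          match bring_down D j x with
          | Some (pl, D') =>
              match align_aux D' Dt (S j) fuel' with
              | Some pl2 => Some (pl ++ pl2)
              | None => None
              end
          | None => None
          end
      end
  end.
Definition align D Dt := align_aux D Dt 0 (length Dt).

(* Normal form: of two consecutive layers acting on disjoint parts of the word, the
   one acting further left comes first. *)
Definition acts_right_of (x y : layer) : bool :=
  let '(L1, g1, R1) := x in let '(L2, g2, R2) := y in
  match strip_prefix (L1 ++ gen_cod g1) L2 with
  | Some _ => false
  | None =>
      match strip_prefix (L2 ++ gen_dom g2) L1 with
      | Some m => if word_eq_dec R2 (m ++ gen_cod g1 ++ R1) then true else false
      | None => false
      end
  end.

Fixpoint left_pass_from (x : layer) (D : list layer) (j : nat) : list nat * list layer :=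
  match D with
  | [] => ([], [x])
  | y :: D' =>
      let fallback := let '(pl, D3) := left_pass_from y D' (S j) in (pl, x :: D3) in
      if acts_right_of x y then
        match swap_layers x y with
        | Some (y', x') => let '(pl, D3) := left_pass_from x' D' (S j) in (j :: pl, y' :: D3)
        | None => fallback
        end
      else fallback
  end.
Definition left_pass (D : list layer) : list nat * list layer :=
  match D with [] => ([], []) | x :: D' => left_pass_from x D' 0 end.

Fixpoint left_normal_form_aux (D : list layer) (fuel : nat) : list nat * list layer :=
  match fuel with
  | 0 => ([], D)
  | S f =>
      let '(pl, D') := left_pass D in
      match pl with
      | [] => ([], D)
      | _ => let '(pl2, D'') := left_normal_form_aux D' f in (pl ++ pl2, D'')
      end
  end.
Definition left_normal_form D := left_normal_form_aux D (S (length D * length D)).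

Definition find_plan_normal E1 D :=
  match find_plan E1 D with
  | Some p => Some p
  | None =>
      let '(pl, D') := left_normal_form D in
      match find_plan E1 D' with
      | Some (pl2, n, L, R) => Some (pl ++ pl2, n, L, R)
      | None => None
      end
  end.

(** * Interpretation in a 2-category *)

Section Interpretation.
Variable K : TwoCat.
Variable k : Ob K.
Variables s t : H1 K.
Hypothesis s_dom : dom K s = k.
Hypothesis s_cod : cod K s = k.
Hypothesis t_dom : dom K t = k.
Hypothesis t_cod : cod K t = k.

Definition letter_cell (a : letter) : H1 K := match a with LS => s | LT => t end.

Fixpoint wcell (u : word) : H1 K :=
  match u with [] => id1 K k | a :: u' => c1 (letter_cell a) (wcell u') end.

Lemma letter_cell_dom a : dom K (letter_cell a) = k.
Proof. destruct a; assumption. Qed.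
Lemma letter_cell_cod a : cod K (letter_cell a) = k.
Proof. destruct a; assumption. Qed.

Lemma wcell_dom_cod u : dom K (wcell u) = k /\ cod K (wcell u) = k.
Proof.
  induction u as [|a u [IH1 IH2]]; simpl; unfold c1.
  - split; [apply dom_id1 | apply cod_id1].
  - rewrite dom_comp1, cod_comp1; rewrite ?letter_cell_dom, ?letter_cell_cod; auto.
Qed.
Lemma wcell_dom u : dom K (wcell u) = k. Proof. apply wcell_dom_cod. Qed.
Lemma wcell_cod u : cod K (wcell u) = k. Proof. apply wcell_dom_cod. Qed.

Lemma wcell_app u v : c1 (wcell u) (wcell v) = wcell (u ++ v).
Proof.
  induction u as [|a u IH]; simpl; unfold c1.
  - rewrite <- (wcell_cod v). apply comp1_id_l.
  - rewrite <- comp1_assoc; [fold (c1 (wcell u) (wcell v)); rewrite IH; reflexivity | |];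
      rewrite ?wcell_cod, ?wcell_dom, ?letter_cell_dom; reflexivity.
Qed.

Definition spells (f : H1 K) (u : word) := f = wcell u.

Lemma spells_s : spells s [LS].
Proof. unfold spells; simpl; unfold c1. rewrite <- s_dom. symmetry; apply comp1_id_r. Qed.
Lemma spells_t : spells t [LT].
Proof. unfold spells; simpl; unfold c1. rewrite <- t_dom. symmetry; apply comp1_id_r. Qed.
Lemma spells_id : spells (id1 K k) [].
Proof. reflexivity. Qed.
Lemma spells_wcell u : spells (wcell u) u.
Proof. reflexivity. Qed.
Lemma spells_c1 f g u v : spells f u -> spells g v -> spells (c1 f g) (u ++ v).
Proof. unfold spells; intros -> ->. apply wcell_app. Qed.

Ltac spell :=
  lazymatch goal with |- spells ?f _ =>
    lazymatch f with
    | c1 _ _ => eapply spells_c1; spell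
    | id1 _ _ => apply spells_id
    | wcell _ => apply spells_wcell
    | _ => first [apply spells_s | apply spells_t]
    end
  end.

Definition typed (a : C2 K) (u v : word) := src K a = wcell u /\ tgt K a = wcell v.

Lemma typed_cell2 a u v f g : typed a u v -> spells f u -> spells g v -> Cell2 a f g.
Proof. intros [H1 H2] -> ->; split; assumption. Qed.
Lemma cell2_typed a f g u v : Cell2 a f g -> spells f u -> spells g v -> typed a u v.
Proof. intros [H1 H2] E1 E2; unfold spells in *; split; congruence. Qed.

Lemma typed_vc a b u v w : typed b u v -> typed a v w -> typed (vc a b) u w.
Proof.
  intros [H1 H2] [H3 H4]; unfold vc; split;
    [rewrite src_vcomp | rewrite tgt_vcomp]; congruence.
Qed.

Ltac side_cond :=
  repeat match goal with
  | H : src _ ?a = _ |- context [src _ ?a] => rewrite H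
  | H : tgt _ ?a = _ |- context [tgt _ ?a] => rewrite H
  end;
  rewrite ?src_id2, ?tgt_id2, ?wcell_cod, ?wcell_dom; congruence.

Lemma typed_wl a L u v : typed a u v -> typed (wl (wcell L) a) (L ++ u) (L ++ v).
Proof.
  intros [H1 H2]; unfold wl; split;
    [rewrite src_hcomp, src_id2, H1 | rewrite tgt_hcomp, tgt_id2, H2];
    solve [apply wcell_app | side_cond].
Qed.
Lemma typed_wr a R u v : typed a u v -> typed (wr a (wcell R)) (u ++ R) (v ++ R).
Proof.
  intros [H1 H2]; unfold wr; split;
    [rewrite src_hcomp, src_id2, H1 | rewrite tgt_hcomp, tgt_id2, H2];
    solve [apply wcell_app | side_cond].
Qed.
Lemma typed_id u : typed (id2 K (wcell u)) u u.
Proof. split; [apply src_id2 | apply tgt_id2]. Qed.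

Lemma vc_id_l a u v : typed a u v -> vc (id2 K (wcell v)) a = a.
Proof. intros [_ H]; rewrite <- H; apply vcomp_id_l. Qed.
Lemma vc_id_r a u v : typed a u v -> vc a (id2 K (wcell u)) = a.
Proof. intros [H _]; rewrite <- H; apply vcomp_id_r. Qed.
Lemma vc_assoc a b c u v w x : typed c u v -> typed b v w -> typed a w x ->
  vc a (vc b c) = vc (vc a b) c.
Proof. intros [? ?] [? ?] [? ?]; unfold vc; apply vcomp_assoc; congruence. Qed.

Lemma vcomp_id2_id2 f : vcomp K (id2 K f) (id2 K f) = id2 K f.
Proof. generalize (vcomp_id_l K (id2 K f)); rewrite tgt_id2; auto. Qed.

Lemma wl_vc a b L u v w : typed b u v -> typed a v w ->
  wl (wcell L) (vc a b) = vc (wl (wcell L) a) (wl (wcell L) b).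
Proof.
  intros [H1 H2] [H3 H4]; unfold wl, vc.
  rewrite <- interchange by side_cond. rewrite vcomp_id2_id2; reflexivity.
Qed.
Lemma wr_vc a b R u v w : typed b u v -> typed a v w ->
  wr (vc a b) (wcell R) = vc (wr a (wcell R)) (wr b (wcell R)).
Proof.
  intros [H1 H2] [H3 H4]; unfold wr, vc.
  rewrite <- interchange by side_cond. rewrite vcomp_id2_id2; reflexivity.
Qed.
Lemma wl_id L u : wl (wcell L) (id2 K (wcell u)) = id2 K (wcell (L ++ u)).
Proof. unfold wl. rewrite hcomp_id2, <- wcell_app by side_cond; reflexivity. Qed.
Lemma wr_id R u : wr (id2 K (wcell u)) (wcell R) = id2 K (wcell (u ++ R)).
Proof. unfold wr. rewrite hcomp_id2, <- wcell_app by side_cond; reflexivity. Qed.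
Lemma wl_wl a L1 L2 u v : typed a u v -> wl (wcell L1) (wl (wcell L2) a) = wl (wcell (L1 ++ L2)) a.
Proof.
  intros [H1 H2]; unfold wl.
  rewrite hcomp_assoc, hcomp_id2, wcell_app by side_cond; reflexivity.
Qed.
Lemma wr_wr a R1 R2 u v : typed a u v -> wr (wr a (wcell R1)) (wcell R2) = wr a (wcell (R1 ++ R2)).
Proof.
  intros [H1 H2]; unfold wr.
  rewrite <- hcomp_assoc, hcomp_id2, wcell_app by side_cond; reflexivity.
Qed.
Lemma wl_wr a L R u v : typed a u v -> wl (wcell L) (wr a (wcell R)) = wr (wl (wcell L) a) (wcell R).
Proof. intros [H1 H2]; unfold wl, wr. apply hcomp_assoc; side_cond. Qed.
Lemma wl_nil a u v : typed a u v -> wl (wcell []) a = a.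
Proof. intros [H1 H2]; unfold wl; simpl. rewrite <- (wcell_cod u), <- H1. apply hcomp_id_l. Qed.
Lemma wr_nil a u v : typed a u v -> wr a (wcell []) = a.
Proof. intros [H1 H2]; unfold wr; simpl. rewrite <- (wcell_dom u), <- H1. apply hcomp_id_r. Qed.

Lemma hcomp_as_vc a c u1 v1 u2 v2 : typed a u1 v1 -> typed c u2 v2 ->
  hcomp K a c = vc (wl (wcell v1) c) (wr a (wcell u2)) /\
  hcomp K a c = vc (wr a (wcell v2)) (wl (wcell u1) c).
Proof.
  intros [H1 H2] [H3 H4]; unfold wl, wr, vc; split;
    rewrite <- interchange by side_cond.
  - rewrite <- H2, <- H3, vcomp_id_l, vcomp_id_r; reflexivity.
  - rewrite <- H1, <- H4, vcomp_id_l, vcomp_id_r; reflexivity.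
Qed.

Lemma whisker_exchange a c u1 v1 u2 v2 : typed a u1 v1 -> typed c u2 v2 ->
  vc (wl (wcell v1) c) (wr a (wcell u2)) = vc (wr a (wcell v2)) (wl (wcell u1) c).
Proof. intros Ha Hc. destruct (hcomp_as_vc Ha Hc) as [E1 E2]. congruence. Qed.

Section Valuation.
Variable val : gen -> C2 K.
Hypothesis val_typed : forall g, typed (val g) (gen_dom g) (gen_cod g).

Definition eval_layer (x : layer) : C2 K :=
  let '(L, g, R) := x in wl (wcell L) (wr (val g) (wcell R)).

Lemma eval_layer_typed x : typed (eval_layer x) (ldom x) (lcod x).
Proof. destruct x as [[L g] R]; apply typed_wl, typed_wr, val_typed. Qed.

Hint Resolve typed_vc typed_wl typed_wr typed_id eval_layer_typed val_typed : typed.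

Fixpoint eval_diag (D : list layer) (acc : C2 K) : C2 K :=
  match D with [] => acc | x :: D' => eval_diag D' (vc (eval_layer x) acc) end.

Lemma eval_diag_app D1 D2 acc : eval_diag (D1 ++ D2) acc = eval_diag D2 (eval_diag D1 acc).
Proof. revert acc; induction D1; simpl; auto. Qed.

Lemma diag_cod_app u D1 D2 :
  diag_cod u (D1 ++ D2) = match diag_cod u D1 with Some u1 => diag_cod u1 D2 | None => None end.
Proof.
  revert u; induction D1 as [|x D1 IH]; intro u; simpl; auto.
  destruct (word_eq_dec u (ldom x)); auto.
Qed.

Lemma diag_cod_cons x D : diag_cod (ldom x) (x :: D) = diag_cod (lcod x) D.
Proof. simpl; destruct (word_eq_dec (ldom x) (ldom x)); congruence. Qed.

Lemma diag_cod_cons_inv u x D v : diag_cod u (x :: D) = Some v ->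
  u = ldom x /\ diag_cod (lcod x) D = Some v.
Proof. simpl; destruct (word_eq_dec u (ldom x)); [auto | discriminate]. Qed.

Lemma eval_diag_typed D : forall u v acc w, diag_cod u D = Some v -> typed acc w u ->
  typed (eval_diag D acc) w v.
Proof.
  induction D as [|x D IH]; intros u v acc w Hw Ha; simpl.
  - simpl in Hw; congruence.
  - apply diag_cod_cons_inv in Hw as [-> Hw]. eapply IH; eauto with typed.
Qed.

Lemma eval_diag_vc D : forall u v acc w, diag_cod u D = Some v -> typed acc w u ->
  eval_diag D acc = vc (eval_diag D (id2 K (wcell u))) acc.
Proof.
  induction D as [|x D IH]; intros u v acc w Hw Ha; simpl.
  - symmetry; eapply vc_id_l; eauto.
  - apply diag_cod_cons_inv in Hw as [-> Hw].
    rewrite (IH _ _ _ _ Hw (typed_vc Ha (eval_layer_typed x))),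
      (vc_id_r (eval_layer_typed x)), (IH _ _ _ _ Hw (eval_layer_typed x)).
    eapply vc_assoc; eauto with typed. eapply eval_diag_typed; eauto with typed.
Qed.

Lemma layer_exchange L1 g1 m g2 R2 :
  vc (eval_layer (L1 ++ gen_cod g1 ++ m, g2, R2)) (eval_layer (L1, g1, m ++ gen_dom g2 ++ R2))
  = vc (eval_layer (L1, g1, m ++ gen_cod g2 ++ R2)) (eval_layer (L1 ++ gen_dom g1 ++ m, g2, R2)).
Proof.
  simpl. set (c := wl (wcell m) (wr (val g2) (wcell R2))).
  assert (Hc : typed c (m ++ gen_dom g2 ++ R2) (m ++ gen_cod g2 ++ R2)) by (unfold c; eauto with typed).
  assert (Ew : forall w, wl (wcell (L1 ++ w ++ m)) (wr (val g2) (wcell R2)) = wl (wcell L1) (wl (wcell w) c)).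
  { intro w; unfold c.
    rewrite !(@wl_wl (wr (val g2) (wcell R2)) _ _ (gen_dom g2 ++ R2) (gen_cod g2 ++ R2)) by eauto with typed.
    reflexivity. }
  rewrite !Ew, <- (wl_vc _ (typed_wr _ (val_typed g1)) (typed_wl _ Hc)),
    (whisker_exchange (val_typed g1) Hc), (wl_vc _ (typed_wl _ Hc) (typed_wr _ (val_typed g1))).
  reflexivity.
Qed.

Lemma swap_layers_sound x y y' x' : swap_layers x y = Some (y', x') ->
  ldom y = lcod x /\ ldom y' = ldom x /\ lcod y' = ldom x' /\ lcod x' = lcod y /\
  vc (eval_layer y) (eval_layer x) = vc (eval_layer x') (eval_layer y').
Proof.
  destruct x as [[L1 g1] R1], y as [[L2 g2] R2]; unfold swap_layers.
  destruct (strip_prefix (L1 ++ gen_cod g1) L2) as [m|] eqn:E1.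
  - destruct (word_eq_dec R1 (m ++ gen_dom g2 ++ R2)) as [->|]; [|discriminate].
    intro H; inversion H; subst; clear H.
    apply strip_prefix_app in E1; subst; simpl; rewrite <- !app_assoc.
    repeat split; apply layer_exchange.
  - destruct (strip_prefix (L2 ++ gen_dom g2) L1) as [m|] eqn:E3; [|discriminate].
    destruct (word_eq_dec R2 (m ++ gen_cod g1 ++ R1)) as [->|]; [|discriminate].
    intro H; inversion H; subst; clear H.
    apply strip_prefix_app in E3; subst; simpl; rewrite <- !app_assoc.
    repeat split; symmetry; apply layer_exchange.
Qed.

Lemma swap_at_sound n : forall D u v D', diag_cod u D = Some v -> swap_at n D = Some D' ->
  diag_cod u D' = Some v /\ (forall acc w, typed acc w u -> eval_diag D acc = eval_diag D' acc).
Proof.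
  induction n as [|n IH]; intros D u v D' Hw Hs.
  - destruct D as [|x [|y D]]; simpl in Hs; try discriminate.
    destruct (swap_layers x y) as [[y' x']|] eqn:E; [|discriminate].
    inversion Hs; subst; clear Hs.
    destruct (swap_layers_sound _ _ E) as (E1 & E2 & E3 & E4 & E5).
    apply diag_cod_cons_inv in Hw as [-> Hw]. apply diag_cod_cons_inv in Hw as [_ Hw].
    split.
    + rewrite <- E2, diag_cod_cons, E3, diag_cod_cons, E4. exact Hw.
    + intros acc w Ha. simpl.
      assert (Ty : typed (eval_layer y) (lcod x) (lcod y)) by (rewrite <- E1; apply eval_layer_typed).
      assert (Ty' : typed (eval_layer y') (ldom x) (lcod y')) by (rewrite <- E2; apply eval_layer_typed).
      assert (Tx' : typed (eval_layer x') (lcod y') (lcod x')) by (rewrite E3; apply eval_layer_typed).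
      rewrite (vc_assoc Ha (eval_layer_typed x) Ty), E5, <- (vc_assoc Ha Ty' Tx').
      reflexivity.
  - destruct D as [|x D]; simpl in Hs; try discriminate.
    destruct (swap_at n D) as [D''|] eqn:E; [|discriminate].
    inversion Hs; subst; clear Hs.
    apply diag_cod_cons_inv in Hw as [-> Hw].
    destruct (IH _ _ _ _ Hw E) as [H1 H2]. split.
    + rewrite diag_cod_cons. exact H1.
    + intros acc w Ha. apply (H2 _ w). eauto with typed.
Qed.

Lemma swaps_sound ns : forall D u v D', diag_cod u D = Some v -> swaps ns D = Some D' ->
  diag_cod u D' = Some v /\ (forall acc w, typed acc w u -> eval_diag D acc = eval_diag D' acc).
Proof.
  induction ns as [|n ns IH]; intros D u v D' Hw Hs; simpl in Hs.
  - inversion Hs; subst; auto.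
  - destruct (swap_at n D) as [D1|] eqn:E; [|discriminate].
    destruct (@swap_at_sound n D u v D1 Hw E) as [H1 H2].
    destruct (IH D1 u v D' H1 Hs) as [H3 H4]. split; auto.
    intros acc w Ha. rewrite (H2 _ _ Ha). eapply H4; eauto.
Qed.

Lemma eval_layer_whisk L R x : eval_layer (whisk L R x) = wl (wcell L) (wr (eval_layer x) (wcell R)).
Proof.
  destruct x as [[L0 g] R0]; simpl.
  rewrite <- (wl_wr L0 R (typed_wr R0 (val_typed g))), (wr_wr R0 R (val_typed g)),
    (wl_wl L L0 (typed_wr (R0 ++ R) (val_typed g))).
  reflexivity.
Qed.

Lemma ldom_whisk L R x : ldom (whisk L R x) = L ++ ldom x ++ R.
Proof. destruct x as [[L0 g] R0]; simpl; rewrite <- !app_assoc; reflexivity. Qed.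
Lemma lcod_whisk L R x : lcod (whisk L R x) = L ++ lcod x ++ R.
Proof. destruct x as [[L0 g] R0]; simpl; rewrite <- !app_assoc; reflexivity. Qed.

Lemma diag_cod_whisk L R E : forall u v, diag_cod u E = Some v ->
  diag_cod (L ++ u ++ R) (map (whisk L R) E) = Some (L ++ v ++ R).
Proof.
  induction E as [|x E IH]; intros u v Hw.
  - simpl in *; congruence.
  - apply diag_cod_cons_inv in Hw as [-> Hw].
    cbn [map]; rewrite <- ldom_whisk, diag_cod_cons, lcod_whisk. auto.
Qed.

Lemma eval_diag_whisk L R E : forall u v b w, diag_cod u E = Some v -> typed b w u ->
  eval_diag (map (whisk L R) E) (wl (wcell L) (wr b (wcell R)))
  = wl (wcell L) (wr (eval_diag E b) (wcell R)).
Proof.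
  induction E as [|x E IH]; intros u v b w Hw Hb; simpl; auto.
  apply diag_cod_cons_inv in Hw as [-> Hw].
  rewrite eval_layer_whisk, <- (wl_vc L (typed_wr R Hb) (typed_wr R (eval_layer_typed x))),
    <- (wr_vc R Hb (eval_layer_typed x)).
  eapply IH; eauto with typed.
Qed.

Lemma eval_diag_whisk_vc L R E u v acc w : diag_cod u E = Some v -> typed acc w (L ++ u ++ R) ->
  eval_diag (map (whisk L R) E) acc
  = vc (wl (wcell L) (wr (eval_diag E (id2 K (wcell u))) (wcell R))) acc.
Proof.
  intros Hw Ha.
  erewrite eval_diag_vc; [| apply diag_cod_whisk; exact Hw | exact Ha].
  rewrite <- (wl_id L (u ++ R)), <- (wr_id R u).
  erewrite eval_diag_whisk; eauto with typed.
Qed.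

Definition diag_eq u v D1 D2 :=
  diag_cod u D1 = Some v /\ diag_cod u D2 = Some v /\
  eval_diag D1 (id2 K (wcell u)) = eval_diag D2 (id2 K (wcell u)).

Lemma diag_eq_sym u v D1 D2 : diag_eq u v D1 D2 -> diag_eq u v D2 D1.
Proof. intros (H1 & H2 & H3); repeat split; auto. Qed.
Lemma diag_eq_trans u v D1 D2 D3 : diag_eq u v D1 D2 -> diag_eq u v D2 D3 -> diag_eq u v D1 D3.
Proof. intros (H1 & H2 & H3) (H4 & H5 & H6); repeat split; congruence. Qed.

Lemma replace_at_sound u0 v0 E1 E2 u v n L R D D' : diag_eq u0 v0 E1 E2 ->
  diag_cod u D = Some v -> replace_at u n L R u0 E1 E2 D = Some D' ->
  diag_cod u D' = Some v /\ eval_diag D (id2 K (wcell u)) = eval_diag D' (id2 K (wcell u)).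
Proof.
  intros (HE1 & HE2 & HE) Hw. unfold replace_at.
  destruct (diag_cod u (firstn n D)) as [u1|] eqn:Hp; [|discriminate].
  destruct (word_eq_dec u1 (L ++ u0 ++ R)) as [->|]; [|discriminate].
  destruct (list_eq_dec layer_eq_dec (firstn (length E1) (skipn n D)) (map (whisk L R) E1))
    as [HM|]; [|discriminate].
  intro HD; inversion HD; subst D'; clear HD.
  assert (ED : D = firstn n D ++ map (whisk L R) E1 ++ skipn (length E1) (skipn n D)).
  { rewrite <- HM, !firstn_skipn. reflexivity. }
  rewrite ED, diag_cod_app, Hp, diag_cod_app, (diag_cod_whisk L R E1 _ HE1) in Hw.
  split.
  - rewrite diag_cod_app, Hp, diag_cod_app, (diag_cod_whisk L R E2 _ HE2). exact Hw.
  - rewrite ED at 1. rewrite !eval_diag_app.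
    assert (Hty : typed (eval_diag (firstn n D) (id2 K (wcell u))) u (L ++ u0 ++ R))
      by (eapply eval_diag_typed; eauto with typed).
    rewrite (eval_diag_whisk_vc L R E1 _ HE1 Hty), (eval_diag_whisk_vc L R E2 _ HE2 Hty), HE.
    reflexivity.
Qed.

Lemma diag_eq_swaps u v D Dt ns : diag_cod u D = Some v -> swaps ns D = Some Dt -> diag_eq u v D Dt.
Proof.
  intros Hw Hs. destruct (@swaps_sound ns D u v Dt Hw Hs) as [H1 H2].
  repeat split; auto. apply (H2 _ _ (typed_id u)).
Qed.

Lemma diag_eq_swap u v n D D1 Dt : diag_cod u D = Some v -> swap_at n D = Some D1 ->
  diag_eq u v D1 Dt -> diag_eq u v D Dt.
Proof.
  intros Hw Hs. apply diag_eq_trans, (@diag_eq_swaps u v D D1 [n]); auto.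
  simpl; rewrite Hs; reflexivity.
Qed.

Lemma diag_eq_rewrite u v u0 v0 E1 E2 D D1 D2 Dt ns n L R : diag_eq u0 v0 E1 E2 ->
  diag_cod u D = Some v -> swaps ns D = Some D1 -> replace_at u n L R u0 E1 E2 D1 = Some D2 ->
  diag_eq u v D2 Dt -> diag_eq u v D Dt.
Proof.
  intros HE Hw Hs Hr (H1 & H2 & H3).
  destruct (@swaps_sound ns D u v D1 Hw Hs) as [Hw1 Hi1].
  destruct (@replace_at_sound u0 v0 E1 E2 u v n L R D1 D2 HE Hw1 Hr) as [_ Hi2].
  repeat split; auto.
  rewrite (Hi1 _ _ (typed_id u)), Hi2. exact H3.
Qed.

Definition reads_as a u v D := diag_cod u D = Some v /\ a = eval_diag D (id2 K (wcell u)).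

Lemma reads_as_typed a u v D : reads_as a u v D -> typed a u v.
Proof. intros [H1 ->]. eapply eval_diag_typed; eauto with typed. Qed.

Lemma reads_as_gen g : reads_as (val g) (gen_dom g) (gen_cod g) [([], g, [])].
Proof.
  split.
  - destruct g; reflexivity.
  - assert (T : typed (eval_layer ([], g, [])) (gen_dom g) (gen_cod g)).
    { pose proof (eval_layer_typed ([], g, [])) as T; simpl in T; rewrite !app_nil_r in T; exact T. }
    change (val g = vc (eval_layer ([], g, [])) (id2 K (wcell (gen_dom g)))).
    rewrite (vc_id_r T); simpl.
    change (val g = wl (wcell []) (wr (val g) (wcell []))).
    rewrite (wr_nil (val_typed g)), (wl_nil (val_typed g)). reflexivity.
Qed.

Lemma reads_as_vc a b u v1 v2 w Da Db : reads_as b u v1 Db -> reads_as a v2 w Da -> v1 = v2 ->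
  reads_as (vc a b) u w (Db ++ Da).
Proof.
  intros [H1 ->] [H3 ->] <-. split.
  - rewrite diag_cod_app, H1; auto.
  - rewrite eval_diag_app.
    erewrite (eval_diag_vc Da (acc := eval_diag Db (id2 K (wcell u)))); [reflexivity | exact H3 |].
    eapply eval_diag_typed; eauto with typed.
Qed.

Lemma reads_as_wl f a L u v Da : spells f L -> reads_as a u v Da ->
  reads_as (wl f a) (L ++ u) (L ++ v) (map (whisk L []) Da).
Proof.
  intros -> [H1 ->]. split.
  - pose proof (diag_cod_whisk L [] Da _ H1) as HH. rewrite !app_nil_r in HH. exact HH.
  - replace (id2 K (wcell (L ++ u))) with (wl (wcell L) (wr (id2 K (wcell u)) (wcell [])))
      by (rewrite wr_id, wl_id, app_nil_r; reflexivity).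
    erewrite eval_diag_whisk; [| exact H1 | apply typed_id].
    rewrite (wr_nil (eval_diag_typed Da H1 (typed_id u))). reflexivity.
Qed.

Lemma reads_as_wr f a R u v Da : spells f R -> reads_as a u v Da ->
  reads_as (wr a f) (u ++ R) (v ++ R) (map (whisk [] R) Da).
Proof.
  intros -> [H1 ->]. split.
  - exact (diag_cod_whisk [] R Da _ H1).
  - replace (id2 K (wcell (u ++ R))) with (wl (wcell []) (wr (id2 K (wcell u)) (wcell R)))
      by (rewrite wr_id, wl_id; reflexivity).
    erewrite eval_diag_whisk; [| exact H1 | apply typed_id].
    rewrite (wl_nil (typed_wr R (eval_diag_typed Da H1 (typed_id u)))). reflexivity.
Qed.

Lemma reads_as_id f L : spells f L -> reads_as (id2 K f) L L [].
Proof. intros ->. split; reflexivity. Qed.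

Lemma reads_as_hcomp a c u1 v1 u2 v2 Da Dc : reads_as a u1 v1 Da -> reads_as c u2 v2 Dc ->
  reads_as (hcomp K a c) (u1 ++ u2) (v1 ++ v2) (map (whisk [] u2) Da ++ map (whisk v1 []) Dc).
Proof.
  intros Ha Hc.
  rewrite (proj1 (hcomp_as_vc (reads_as_typed Ha) (reads_as_typed Hc))).
  eapply reads_as_vc; [eapply reads_as_wr | eapply reads_as_wl | reflexivity];
    solve [apply spells_wcell | eassumption].
Qed.

Lemma diag_eq_of_eq a1 a2 u v D1 D2 : reads_as a1 u v D1 -> reads_as a2 u v D2 -> a1 = a2 ->
  diag_eq u v D1 D2.
Proof. intros [H1 ->] [H3 ->] E; repeat split; auto. Qed.

Lemma eq_of_diag_eq a1 a2 u v D1 D2 : reads_as a1 u v D1 -> reads_as a2 u v D2 ->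
  diag_eq u v D1 D2 -> a1 = a2.
Proof. intros [H1 ->] [H3 ->] (_ & _ & E); exact E. Qed.

Ltac reify :=
  lazymatch goal with |- reads_as ?a _ _ _ =>
    lazymatch a with
    | vc _ _ => eapply reads_as_vc; [reify | reify | vm_compute; reflexivity]
    | wl _ _ => eapply reads_as_wl; [spell | reify]
    | wr _ _ => eapply reads_as_wr; [spell | reify]
    | hcomp _ _ _ => eapply reads_as_hcomp; [reify | reify]
    | id2 _ _ => eapply reads_as_id; spell
    | _ => first [ exact (reads_as_gen Mu) | exact (reads_as_gen Eta) | exact (reads_as_gen Psi)
                 | exact (reads_as_gen Nu) | exact (reads_as_gen Vartheta)
                 | exact (reads_as_gen Theta) ]
    end
  end.

Ltac reify_as R a :=
  eassert (R : reads_as a _ _ _) by reify;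
  lazymatch type of R with reads_as ?a ?u ?v ?D =>
    let u' := eval vm_compute in u in
    let v' := eval vm_compute in v in
    let D' := eval vm_compute in D in
    change (reads_as a u' v' D') in R
  end.

Ltac diagram_of H :=
  lazymatch type of H with ?a1 = ?a2 =>
    let R1 := fresh in let R2 := fresh in
    reify_as R1 a1; reify_as R2 a2;
    apply (diag_eq_of_eq R1 R2 H)
  end.

Ltac diagram_goal :=
  lazymatch goal with |- ?a1 = ?a2 =>
    let R1 := fresh in let R2 := fresh in
    reify_as R1 a1; reify_as R2 a2;
    apply (eq_of_diag_eq R1 R2); clear R1 R2
  end.

(* A goal [diag_eq u v D Dt] is proved by transforming [D]: [drw H] rewrites with the
   diagram equation [H] once the layers of its left side are brought together by
   interchanges, [dswap n] interchanges layers [n] and [n+1], [dnorm] passes to the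
   normal form and [dclose] concludes by interchanges alone; the [_tgt] variants act on [Dt]. *)
Ltac drw H :=
  lazymatch type of H with diag_eq ?u0 ?v0 ?E1 ?E2 =>
  lazymatch goal with |- diag_eq ?u ?v ?D ?Dt =>
    let p := eval vm_compute in (find_plan_normal E1 D) in
    lazymatch p with
    | Some (?ns, ?n, ?L, ?R) =>
        eapply (@diag_eq_rewrite u v u0 v0 E1 E2 D _ _ Dt ns n L R H);
        [vm_compute; reflexivity | vm_compute; reflexivity | vm_compute; reflexivity |]
    | None => fail "drw: no match"
    end
  end end.
Ltac drw_tgt H := apply diag_eq_sym; drw H; apply diag_eq_sym.
Ltac drw_all H := repeat drw H; apply diag_eq_sym; repeat drw H; apply diag_eq_sym.

Ltac dswap n :=
  lazymatch goal with |- diag_eq ?u ?v ?D ?Dt =>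
    eapply (@diag_eq_swap u v n D _ Dt); [vm_compute; reflexivity | vm_compute; reflexivity |]
  end.

Ltac dnorm :=
  lazymatch goal with |- diag_eq ?u ?v ?D ?Dt =>
    let p := eval vm_compute in (fst (left_normal_form D)) in
    eapply diag_eq_trans; [apply (@diag_eq_swaps u v D _ p); vm_compute; reflexivity |]
  end.
Ltac dnorm_tgt := apply diag_eq_sym; dnorm; apply diag_eq_sym.

Ltac dclose :=
  lazymatch goal with |- diag_eq ?u ?v ?D ?Dt =>
    let p := eval vm_compute in (align D Dt) in
    lazymatch p with
    | Some ?ns => apply (@diag_eq_swaps u v D Dt ns); vm_compute; reflexivity
    | None => fail "dclose: cannot align"
    end
  end.
Ltac dclose_norm := dnorm; dnorm_tgt; dclose.

(** * Monads in EM^w(K) on (t, mu, eta) and pre-monads on st *)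

Definition theta_of (mu psi nu : C2 K) : C2 K :=
  vc (vc (vc (wl s mu) (wr (wl s mu) t)) (wr nu (c1 t t))) (wr (wl s psi) t).
Definition psi_of (mu eta vth Th : C2 K) : C2 K :=
  vc (vc Th (wr (vc (wl s mu) (wr vth t)) (c1 s t))) (wl (c1 t s) eta).
Definition nu_of (eta Th : C2 K) : C2 K :=
  vc (vc Th (wr (wl s eta) (c1 s t))) (wl (c1 s s) eta).

Section MonadValuation.
Hypothesis val_monad : is_monad k t (val Mu) (val Eta).

Lemma mu_assoc_diag :
  diag_eq [LT;LT;LT] [LT] [([], Mu, [LT]); ([], Mu, [])] [([LT], Mu, []); ([], Mu, [])].
Proof. destruct val_monad as (_ & _ & _ & _ & E & _); diagram_of E. Qed.

Lemma mu_unit_l_diag : diag_eq [LT] [LT] [([], Eta, [LT]); ([], Mu, [])] [].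
Proof. destruct val_monad as (_ & _ & _ & _ & _ & E & _); diagram_of E. Qed.

Lemma mu_unit_r_diag : diag_eq [LT] [LT] [([LT], Eta, []); ([], Mu, [])] [].
Proof. destruct val_monad as (_ & _ & _ & _ & _ & _ & E); diagram_of E. Qed.

Lemma smu_normal :
  diag_eq [LS;LT;LT] [LS;LT] [([LS],Mu,[]); ([],Eta,[LS;LT]); ([],Psi,[LT]); ([LS],Mu,[])]
    [([],Eta,[LS;LT;LT]); ([],Psi,[LT;LT]); ([LS],Mu,[LT]); ([LS],Mu,[])].
Proof. dnorm. drw (diag_eq_sym mu_assoc_diag). dclose. Qed.

Section PsiNuLaws.
Hypothesis psi_mu :
  diag_eq [LT;LT;LS] [LS;LT] [([LT], Psi, []); ([], Psi, [LT]); ([LS], Mu, [])]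
    [([], Mu, [LS]); ([], Psi, [])].
Hypothesis nu_psi :
  diag_eq [LT;LS;LS] [LS;LT] [([], Psi, [LS]); ([LS], Psi, []); ([], Nu, [LT]); ([LS], Mu, [])]
    [([LT], Nu, []); ([], Psi, [LT]); ([LS], Mu, [])].
Hypothesis nu_normal :
  diag_eq [LS;LS] [LS;LT] [([], Nu, [])]
    [([], Nu, []); ([], Eta, [LS;LT]); ([], Psi, [LT]); ([LS], Mu, [])].

Lemma psi_normal :
  diag_eq [LT;LS] [LS;LT] [([],Psi,[]); ([],Eta,[LS;LT]); ([],Psi,[LT]); ([LS],Mu,[])] [([],Psi,[])].
Proof. drw psi_mu. drw mu_unit_l_diag. dclose. Qed.

Lemma snu_nu_normal :
  diag_eq [LS;LS;LS] [LS;LT]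
    [([LS],Nu,[]); ([],Nu,[LT]); ([LS],Mu,[]); ([],Eta,[LS;LT]); ([],Psi,[LT]); ([LS],Mu,[])]
    [([LS],Nu,[]); ([],Nu,[LT]); ([LS],Mu,[])].
Proof. drw smu_normal. drw (diag_eq_sym nu_normal). dclose. Qed.

Lemma psi_snu_nu :
  diag_eq [LT;LS;LS;LS] [LS;LT]
    [([],Psi,[LS;LS]); ([LS],Psi,[LS]); ([LS;LS],Psi,[]); ([LS],Nu,[LT]); ([],Nu,[LT;LT]);
     ([LS],Mu,[LT]); ([LS],Mu,[])]
    [([LT;LS],Nu,[]); ([LT],Nu,[LT]); ([LT;LS],Mu,[]); ([],Psi,[LT]); ([LS],Mu,[])].
Proof.
  drw mu_assoc_diag. dswap 4. drw nu_psi. dswap 0. dswap 3.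
  drw (diag_eq_sym mu_assoc_diag). drw nu_psi. drw mu_assoc_diag. dswap 2. dclose.
Qed.

End PsiNuLaws.

Section FromEMwMonad.
Hypothesis val_emw : EMw_monad k t (val Mu) (val Eta) s (val Psi, val Nu, val Vartheta).
Hypothesis val_theta : val Theta = theta_of (val Mu) (val Psi) (val Nu).

Ltac emw_law n :=
  let E := fresh in
  unfold EMw_monad, em_1cell, em_2cell, em_vcomp, em_hcomp, em_id2 in val_emw;
  lazymatch n with
  | 1 => destruct val_emw as ((_ & _ & _ & E) & _)
  | 2 => destruct val_emw as (_ & (_ & E & _) & _)
  | 3 => destruct val_emw as (_ & (_ & _ & E) & _)
  | 4 => destruct val_emw as (_ & _ & (_ & E & _) & _)
  | 5 => destruct val_emw as (_ & _ & (_ & _ & E) & _)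
  | 6 => destruct val_emw as (_ & _ & _ & E & _)
  | 7 => destruct val_emw as (_ & _ & _ & _ & E & _)
  | 8 => destruct val_emw as (_ & _ & _ & _ & _ & E)
  end;
  diagram_of E.

Lemma emw_psi_mu :
  diag_eq [LT;LT;LS] [LS;LT] [([LT], Psi, []); ([], Psi, [LT]); ([LS], Mu, [])]
    [([], Mu, [LS]); ([], Psi, [])].
Proof. emw_law 1. Qed.

Lemma emw_nu_psi :
  diag_eq [LT;LS;LS] [LS;LT] [([], Psi, [LS]); ([LS], Psi, []); ([], Nu, [LT]); ([LS], Mu, [])]
    [([LT], Nu, []); ([], Psi, [LT]); ([LS], Mu, [])].
Proof. emw_law 2. Qed.

Lemma emw_nu_normal :
  diag_eq [LS;LS] [LS;LT] [([], Nu, [])]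
    [([], Nu, []); ([], Eta, [LS;LT]); ([], Psi, [LT]); ([LS], Mu, [])].
Proof. emw_law 3. Qed.

Lemma emw_vartheta_psi :
  diag_eq [LT] [LS;LT] [([], Vartheta, [LT]); ([LS], Mu, [])]
    [([LT], Vartheta, []); ([], Psi, [LT]); ([LS], Mu, [])].
Proof. emw_law 4. Qed.

Lemma emw_vartheta_normal :
  diag_eq [] [LS;LT] [([], Vartheta, [])]
    [([], Vartheta, []); ([], Eta, [LS;LT]); ([], Psi, [LT]); ([LS], Mu, [])].
Proof. emw_law 5. Qed.

Lemma emw_nu_assoc :
  diag_eq [LS;LS;LS] [LS;LT]
    [([], Nu, [LS]); ([LS], Psi, []); ([LS], Eta, [LS;LT]); ([LS], Psi, [LT]); ([LS;LS], Mu, []);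
     ([], Nu, [LT]); ([LS], Mu, [])]
    [([], Eta, [LS;LS;LS]); ([], Psi, [LS;LS]); ([LS], Psi, [LS]); ([LS;LS], Psi, []);
     ([LS], Nu, [LT]); ([LS;LS], Mu, []); ([], Nu, [LT]); ([LS], Mu, [])].
Proof. emw_law 6. Qed.

Lemma emw_nu_unit_l :
  diag_eq [LS] [LS;LT]
    [([], Vartheta, [LS]); ([LS], Psi, []); ([LS], Eta, [LS;LT]); ([LS], Psi, [LT]);
     ([LS;LS], Mu, []); ([], Nu, [LT]); ([LS], Mu, [])]
    [([], Eta, [LS]); ([], Psi, [])].
Proof. emw_law 7. Qed.

Lemma emw_nu_unit_r :
  diag_eq [LS] [LS;LT]
    [([], Eta, [LS]); ([], Psi, []); ([LS], Vartheta, [LT]); ([LS;LS], Mu, []); ([], Nu, [LT]);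
     ([LS], Mu, [])]
    [([], Eta, [LS]); ([], Psi, [])].
Proof. emw_law 8. Qed.

Lemma theta_diag :
  diag_eq [LS;LT;LS;LT] [LS;LT] [([], Theta, [])]
    [([LS], Psi, [LT]); ([], Nu, [LT;LT]); ([LS], Mu, [LT]); ([LS], Mu, [])].
Proof. unfold theta_of in val_theta; diagram_of val_theta. Qed.

Lemma svartheta_nu_normal :
  diag_eq [LS] [LS;LT]
    [([LS],Vartheta,[]); ([],Nu,[LT]); ([LS],Mu,[]); ([],Eta,[LS;LT]); ([],Psi,[LT]); ([LS],Mu,[])]
    [([LS],Vartheta,[]); ([],Nu,[LT]); ([LS],Mu,[])].
Proof. drw smu_normal. drw (diag_eq_sym emw_nu_normal). dclose. Qed.

Lemma nu_unit_r_simpl :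
  diag_eq [LS] [LS;LT] [([LS],Vartheta,[]); ([],Nu,[LT]); ([LS],Mu,[])] [([],Eta,[LS]); ([],Psi,[])].
Proof.
  apply diag_eq_sym. drw (diag_eq_sym emw_nu_unit_r). drw emw_vartheta_psi. dnorm.
  drw (diag_eq_sym mu_assoc_diag). dswap 1. drw emw_nu_psi. drw mu_assoc_diag. dswap 3.
  drw_tgt (diag_eq_sym svartheta_nu_normal). dclose.
Qed.

Lemma nu_unit_l_simpl :
  diag_eq [LS] [LS;LT] [([],Vartheta,[LS]); ([LS],Psi,[]); ([],Nu,[LT]); ([LS],Mu,[])]
    [([],Eta,[LS]); ([],Psi,[])].
Proof. apply diag_eq_sym. drw (diag_eq_sym emw_nu_unit_l). drw (psi_normal emw_psi_mu). dclose. Qed.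

Lemma theta_vartheta_st :
  diag_eq [LS;LT] [LS;LT]
    [([],Vartheta,[LS;LT]); ([LS],Psi,[LT]); ([],Nu,[LT;LT]); ([LS],Mu,[LT]); ([LS],Mu,[])]
    [([],Eta,[LS;LT]); ([],Psi,[LT]); ([LS],Mu,[])].
Proof. drw nu_unit_l_simpl. dclose. Qed.

Lemma theta_st_vartheta :
  diag_eq [LS;LT] [LS;LT]
    [([LS;LT],Vartheta,[]); ([LS],Psi,[LT]); ([],Nu,[LT;LT]); ([LS],Mu,[LT]); ([LS],Mu,[])]
    [([],Eta,[LS;LT]); ([],Psi,[LT]); ([LS],Mu,[])].
Proof.
  drw mu_assoc_diag. dswap 2. drw (diag_eq_sym emw_vartheta_psi). dswap 1.
  drw (diag_eq_sym mu_assoc_diag). drw nu_unit_r_simpl. dclose.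
Qed.

Lemma spsi_nu_normal :
  diag_eq [LS;LT;LS] [LS;LT]
    [([],Eta,[LS;LT;LS]); ([],Psi,[LT;LS]); ([LS],Mu,[LS]); ([LS],Psi,[]); ([],Nu,[LT]); ([LS],Mu,[])]
    [([LS],Psi,[]); ([],Nu,[LT]); ([LS],Mu,[])].
Proof.
  drw (diag_eq_sym emw_psi_mu). dswap 1. dswap 4. drw (diag_eq_sym mu_assoc_diag).
  drw emw_nu_psi. dswap 0. dswap 1. drw (diag_eq_sym emw_nu_normal). dclose.
Qed.

Lemma nu_assoc_simpl :
  diag_eq [LS;LS;LS] [LS;LT] [([LS],Nu,[]); ([],Nu,[LT]); ([LS],Mu,[])]
    [([],Nu,[LS]); ([LS],Psi,[]); ([],Nu,[LT]); ([LS],Mu,[])].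
Proof.
  apply diag_eq_sym. drw (diag_eq_sym (psi_normal emw_psi_mu)). drw emw_nu_assoc. dswap 5.
  drw (diag_eq_sym mu_assoc_diag). drw (psi_snu_nu emw_nu_psi). dswap 0. dswap 1. dswap 2.
  drw (snu_nu_normal emw_nu_normal). dclose.
Qed.

Lemma theta_assoc :
  vc (val Theta) (wr (val Theta) (c1 s t)) = vc (val Theta) (wl (c1 s t) (val Theta)).
Proof.
  diagram_goal. drw_all theta_diag.
  drw (diag_eq_sym emw_psi_mu). dswap 2. drw (diag_eq_sym emw_psi_mu).
  dswap 1. dswap 2. dswap 6. dswap 5.
  drw (diag_eq_sym mu_assoc_diag). drw (diag_eq_sym mu_assoc_diag). drw (diag_eq_sym nu_assoc_simpl).
  apply diag_eq_sym. dswap 3. dswap 2. dswap 4. dswap 3.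
  repeat drw (diag_eq_sym mu_assoc_diag). drw mu_assoc_diag. drw (diag_eq_sym emw_nu_psi). dswap 4.
  repeat drw (diag_eq_sym mu_assoc_diag). dclose.
Qed.

Lemma theta_unit_comm :
  vc (val Theta) (wr (val Vartheta) (c1 s t)) = vc (val Theta) (wl (c1 s t) (val Vartheta)).
Proof. diagram_goal. drw_all theta_diag. drw theta_vartheta_st. drw_tgt theta_st_vartheta. dclose. Qed.

Lemma theta_unit_unit : vc (val Theta) (hcomp K (val Vartheta) (val Vartheta)) = val Vartheta.
Proof.
  diagram_goal. drw_all theta_diag. drw theta_st_vartheta. drw (diag_eq_sym emw_vartheta_normal).
  dclose.
Qed.

Lemma theta_unit_mult :
  vc (vc (val Theta) (wr (val Theta) (c1 s t))) (wr (val Vartheta) (c1 (c1 s t) (c1 s t)))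
  = val Theta.
Proof. diagram_goal. drw_all theta_diag. drw theta_vartheta_st. drw spsi_nu_normal. dclose. Qed.

Lemma theta_mu :
  vc (val Theta) (wl (c1 (c1 s t) s) (val Mu)) = vc (wl s (val Mu)) (wr (val Theta) t).
Proof.
  diagram_goal. drw_all theta_diag. dswap 0. dswap 1. dswap 2.
  drw (diag_eq_sym mu_assoc_diag). dclose.
Qed.

Lemma psi_of_theta : psi_of (val Mu) (val Eta) (val Vartheta) (val Theta) = val Psi.
Proof.
  unfold psi_of. diagram_goal. drw_all theta_diag. dnorm. drw mu_unit_r_diag.
  drw (diag_eq_sym emw_psi_mu). dswap 0. dswap 3. drw (diag_eq_sym mu_assoc_diag).
  drw theta_vartheta_st. drw (psi_normal emw_psi_mu). dclose.
Qed.

Lemma nu_of_theta : nu_of (val Eta) (val Theta) = val Nu.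
Proof.
  unfold nu_of. diagram_goal. drw_all theta_diag. dnorm. drw mu_unit_r_diag.
  drw (diag_eq_sym nu_unit_r_simpl). dswap 2. drw (diag_eq_sym mu_assoc_diag).
  drw nu_assoc_simpl. dswap 0. drw theta_st_vartheta. drw (diag_eq_sym emw_nu_normal). dclose.
Qed.

Lemma emw_to_premonad : st_premonad k t (val Mu) s (val Theta, val Vartheta).
Proof.
  eassert (Hst : spells (c1 s t) _) by spell.
  refine (conj (conj _ (conj _ (conj _ (conj _ (conj theta_assoc
    (conj theta_unit_comm (conj theta_unit_unit theta_unit_mult))))))) theta_mu);
    [rewrite Hst; apply wcell_dom | rewrite Hst; apply wcell_cod
    | eapply typed_cell2; [| spell | spell]; apply val_typed ..].
Qed.

End FromEMwMonad.

Section FromPremonad.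
Hypothesis val_premonad : st_premonad k t (val Mu) s (val Theta, val Vartheta).
Hypothesis val_psi : val Psi = psi_of (val Mu) (val Eta) (val Vartheta) (val Theta).
Hypothesis val_nu : val Nu = nu_of (val Eta) (val Theta).

Ltac premonad_law n :=
  let E := fresh in
  lazymatch n with
  | 1 => destruct val_premonad as ((_ & _ & _ & _ & E & _) & _)
  | 2 => destruct val_premonad as ((_ & _ & _ & _ & _ & E & _) & _)
  | 3 => destruct val_premonad as ((_ & _ & _ & _ & _ & _ & E & _) & _)
  | 4 => destruct val_premonad as ((_ & _ & _ & _ & _ & _ & _ & E) & _)
  | 5 => destruct val_premonad as (_ & E)
  end;
  diagram_of E.

Lemma theta_assoc_diag :
  diag_eq [LS;LT;LS;LT;LS;LT] [LS;LT] [([], Theta, [LS;LT]); ([], Theta, [])]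
    [([LS;LT], Theta, []); ([], Theta, [])].
Proof. premonad_law 1. Qed.

Lemma theta_unit_comm_diag :
  diag_eq [LS;LT] [LS;LT] [([], Vartheta, [LS;LT]); ([], Theta, [])]
    [([LS;LT], Vartheta, []); ([], Theta, [])].
Proof. premonad_law 2. Qed.

Lemma theta_unit_unit_diag :
  diag_eq [] [LS;LT] [([], Vartheta, []); ([LS;LT], Vartheta, []); ([], Theta, [])]
    [([], Vartheta, [])].
Proof. premonad_law 3. Qed.

Lemma theta_unit_mult_diag :
  diag_eq [LS;LT;LS;LT] [LS;LT] [([], Vartheta, [LS;LT;LS;LT]); ([], Theta, [LS;LT]); ([], Theta, [])]
    [([], Theta, [])].
Proof. premonad_law 4. Qed.

Lemma theta_mu_diag :
  diag_eq [LS;LT;LS;LT;LT] [LS;LT] [([LS;LT;LS], Mu, []); ([], Theta, [])]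
    [([], Theta, [LT]); ([LS], Mu, [])].
Proof. premonad_law 5. Qed.

Lemma psi_diag :
  diag_eq [LT;LS] [LS;LT] [([], Psi, [])]
    [([LT;LS], Eta, []); ([], Vartheta, [LT;LS;LT]); ([LS], Mu, [LS;LT]); ([], Theta, [])].
Proof. unfold psi_of in val_psi; diagram_of val_psi. Qed.

Lemma nu_diag :
  diag_eq [LS;LS] [LS;LT] [([], Nu, [])] [([LS;LS], Eta, []); ([LS], Eta, [LS;LT]); ([], Theta, [])].
Proof. unfold nu_of in val_nu; diagram_of val_nu. Qed.

Lemma theta_vartheta_theta :
  diag_eq [LS;LT;LS;LT] [LS;LT] [([],Theta,[]); ([],Vartheta,[LS;LT]); ([],Theta,[])]
    [([],Theta,[])].
Proof. dswap 0. drw (diag_eq_sym theta_assoc_diag). drw theta_unit_mult_diag. dclose. Qed.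

Lemma vartheta_vartheta_theta :
  diag_eq [] [LS;LT] [([],Vartheta,[]); ([],Vartheta,[LS;LT]); ([],Theta,[])] [([],Vartheta,[])].
Proof. drw theta_unit_comm_diag. drw theta_unit_unit_diag. dclose. Qed.

Lemma smu_vartheta_theta :
  diag_eq [LS;LT;LT] [LS;LT] [([LS],Mu,[]); ([],Vartheta,[LS;LT]); ([],Theta,[])]
    [([],Vartheta,[LS;LT;LT]); ([],Theta,[LT]); ([LS],Mu,[])].
Proof. dswap 0. drw theta_mu_diag. dclose. Qed.

Lemma vartheta_smu_vartheta_theta :
  diag_eq [LT] [LS;LT] [([],Vartheta,[LT]); ([LS],Mu,[]); ([],Vartheta,[LS;LT]); ([],Theta,[])]
    [([],Vartheta,[LT]); ([LS],Mu,[])].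
Proof. drw smu_vartheta_theta. drw vartheta_vartheta_theta. dclose. Qed.

Lemma stvartheta_stsmu_theta :
  diag_eq [LS;LT;LT] [LS;LT] [([LS;LT],Vartheta,[LT]); ([LS;LT;LS],Mu,[]); ([],Theta,[])]
    [([],Vartheta,[LS;LT;LT]); ([],Theta,[LT]); ([LS],Mu,[])].
Proof. drw theta_mu_diag. drw (diag_eq_sym theta_unit_comm_diag). dclose. Qed.

Lemma vartheta_mu_theta :
  diag_eq [LT;LT] [LS;LT]
    [([],Vartheta,[LT;LT]); ([LS],Mu,[LT]); ([LS;LT],Vartheta,[LT]); ([LS;LT;LS],Mu,[]); ([],Theta,[])]
    [([],Mu,[]); ([],Vartheta,[LT]); ([LS],Mu,[])].
Proof.
  drw stvartheta_stsmu_theta. drw vartheta_smu_vartheta_theta. drw mu_assoc_diag. dswap 0. dclose.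
Qed.

Lemma seta_vartheta_theta :
  diag_eq [LS;LT] [LS;LT] [([LS],Eta,[LT]); ([],Vartheta,[LS;LT;LT]); ([],Theta,[LT]); ([LS],Mu,[])]
    [([],Vartheta,[LS;LT]); ([],Theta,[])].
Proof. drw (diag_eq_sym smu_vartheta_theta). drw mu_unit_l_diag. dclose. Qed.

Ltac unfold_psi_nu :=
  drw_all psi_diag; drw_all nu_diag; dnorm; dnorm_tgt;
  drw_all (diag_eq_sym theta_mu_diag); drw_all mu_unit_l_diag;
  drw_all (diag_eq_sym theta_assoc_diag).

Lemma premonad_psi_mu :
  diag_eq [LT;LT;LS] [LS;LT] [([LT], Psi, []); ([], Psi, [LT]); ([LS], Mu, [])]
    [([], Mu, [LS]); ([], Psi, [])].
Proof.
  drw_all psi_diag. dnorm. dnorm_tgt. drw (diag_eq_sym theta_mu_diag). drw mu_unit_l_diag.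
  drw (diag_eq_sym theta_assoc_diag). drw vartheta_mu_theta. dclose_norm.
Qed.

Lemma premonad_nu_psi :
  diag_eq [LT;LS;LS] [LS;LT] [([], Psi, [LS]); ([LS], Psi, []); ([], Nu, [LT]); ([LS], Mu, [])]
    [([LT], Nu, []); ([], Psi, [LT]); ([LS], Mu, [])].
Proof.
  unfold_psi_nu. dswap 6. dswap 5. drw stvartheta_stsmu_theta. dswap 4.
  drw seta_vartheta_theta. drw theta_unit_mult_diag. dclose_norm.
Qed.

Lemma premonad_nu_normal :
  diag_eq [LS;LS] [LS;LT] [([], Nu, [])]
    [([], Nu, []); ([], Eta, [LS;LT]); ([], Psi, [LT]); ([LS], Mu, [])].
Proof.
  unfold_psi_nu. apply diag_eq_sym. drw mu_unit_r_diag. dswap 0. dswap 1.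
  drw theta_unit_mult_diag. dclose_norm.
Qed.

Lemma premonad_vartheta_psi :
  diag_eq [LT] [LS;LT] [([], Vartheta, [LT]); ([LS], Mu, [])]
    [([LT], Vartheta, []); ([], Psi, [LT]); ([LS], Mu, [])].
Proof.
  unfold_psi_nu. apply diag_eq_sym. drw (diag_eq_sym theta_unit_comm_diag).
  drw vartheta_smu_vartheta_theta. dclose.
Qed.

Lemma premonad_vartheta_normal :
  diag_eq [] [LS;LT] [([], Vartheta, [])]
    [([], Vartheta, []); ([], Eta, [LS;LT]); ([], Psi, [LT]); ([LS], Mu, [])].
Proof.
  unfold_psi_nu. apply diag_eq_sym. drw mu_unit_r_diag. drw theta_unit_unit_diag. dclose.
Qed.

Lemma nu_t_smu :
  diag_eq [LS;LS;LT] [LS;LT] [([],Nu,[LT]); ([LS],Mu,[])] [([LS],Eta,[LS;LT]); ([],Theta,[])].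
Proof. drw nu_diag. dnorm. drw (diag_eq_sym theta_mu_diag). drw mu_unit_l_diag. dclose. Qed.

Lemma spsi_seta_theta :
  diag_eq [LS;LT;LS] [LS;LT] [([LS],Psi,[]); ([LS],Eta,[LS;LT]); ([],Theta,[])]
    [([LS;LT;LS],Eta,[]); ([],Theta,[])].
Proof.
  drw psi_diag. dnorm. drw (diag_eq_sym theta_assoc_diag). dswap 2. dswap 1.
  drw stvartheta_stsmu_theta. dswap 0. drw seta_vartheta_theta. drw theta_unit_mult_diag.
  dclose_norm.
Qed.

Lemma premonad_nu_assoc_simpl :
  diag_eq [LS;LS;LS] [LS;LT] [([LS],Nu,[]); ([],Nu,[LT]); ([LS],Mu,[])]
    [([],Nu,[LS]); ([LS],Psi,[]); ([],Nu,[LT]); ([LS],Mu,[])].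
Proof.
  drw nu_t_smu. apply diag_eq_sym. drw nu_t_smu. drw spsi_seta_theta. apply diag_eq_sym.
  drw_all nu_diag. dnorm. dnorm_tgt. drw (diag_eq_sym theta_assoc_diag). dclose_norm.
Qed.

Lemma premonad_nu_assoc :
  diag_eq [LS;LS;LS] [LS;LT]
    [([], Nu, [LS]); ([LS], Psi, []); ([LS], Eta, [LS;LT]); ([LS], Psi, [LT]); ([LS;LS], Mu, []);
     ([], Nu, [LT]); ([LS], Mu, [])]
    [([], Eta, [LS;LS;LS]); ([], Psi, [LS;LS]); ([LS], Psi, [LS]); ([LS;LS], Psi, []);
     ([LS], Nu, [LT]); ([LS;LS], Mu, []); ([], Nu, [LT]); ([LS], Mu, [])].
Proof.
  drw (psi_normal premonad_psi_mu). drw (diag_eq_sym premonad_nu_assoc_simpl).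
  apply diag_eq_sym. dswap 5. drw (diag_eq_sym mu_assoc_diag). drw (psi_snu_nu premonad_nu_psi).
  dswap 0. dswap 1. dswap 2. drw (snu_nu_normal premonad_nu_normal). dclose.
Qed.

Lemma premonad_nu_unit_l :
  diag_eq [LS] [LS;LT]
    [([], Vartheta, [LS]); ([LS], Psi, []); ([LS], Eta, [LS;LT]); ([LS], Psi, [LT]);
     ([LS;LS], Mu, []); ([], Nu, [LT]); ([LS], Mu, [])]
    [([], Eta, [LS]); ([], Psi, [])].
Proof.
  drw (psi_normal premonad_psi_mu). drw nu_t_smu. drw spsi_seta_theta.
  apply diag_eq_sym. drw psi_diag. dnorm. drw mu_unit_r_diag. dclose.
Qed.

Lemma premonad_nu_unit_r :
  diag_eq [LS] [LS;LT]
    [([], Eta, [LS]); ([], Psi, []); ([LS], Vartheta, [LT]); ([LS;LS], Mu, []); ([], Nu, [LT]);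
     ([LS], Mu, [])]
    [([], Eta, [LS]); ([], Psi, [])].
Proof.
  drw nu_t_smu. dswap 3. dswap 2. drw stvartheta_stsmu_theta. drw seta_vartheta_theta.
  drw_all psi_diag. drw theta_vartheta_theta. dclose.
Qed.

Lemma theta_of_psi_nu : theta_of (val Mu) (val Psi) (val Nu) = val Theta.
Proof.
  unfold theta_of. diagram_goal. drw_all psi_diag. drw_all nu_diag. dnorm.
  drw (diag_eq_sym theta_mu_diag). drw mu_unit_l_diag. drw (diag_eq_sym theta_assoc_diag).
  dswap 2. dswap 1. drw stvartheta_stsmu_theta. dswap 0. drw seta_vartheta_theta.
  drw theta_unit_mult_diag. drw (diag_eq_sym theta_mu_diag). drw mu_unit_l_diag. dclose.
Qed.

Lemma premonad_to_emw : EMw_monad k t (val Mu) (val Eta) s (val Psi, val Nu, val Vartheta).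
Proof.
  unfold EMw_monad, em_1cell, em_2cell, em_vcomp, em_hcomp, em_id2.
  repeat match goal with |- _ /\ _ => split end;
    try (eapply typed_cell2; [| spell | spell]; apply val_typed);
    try assumption; diagram_goal.
  all: first [ exact premonad_psi_mu | exact premonad_nu_psi | exact premonad_nu_normal
             | exact premonad_vartheta_psi | exact premonad_vartheta_normal
             | exact premonad_nu_assoc | exact premonad_nu_unit_l | exact premonad_nu_unit_r ].
Qed.

End FromPremonad.
End MonadValuation.
End Valuation.

Definition valuation (mu eta psi nu vth Th : C2 K) (g : gen) : C2 K :=
  match g with
  | Mu => mu | Eta => eta | Psi => psi | Nu => nu | Vartheta => vth | Theta => Th
  end.

Lemma typed_conv a u v u' v' : typed a u v -> u = u' -> v = v' -> typed a u' v'.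
Proof. intros H <- <-; exact H. Qed.
Lemma typed_vc_conv a b u v1 v2 w : typed b u v1 -> typed a v2 w -> v1 = v2 -> typed (vc a b) u w.
Proof. intros H1 H2 <-; eapply typed_vc; eauto. Qed.
Lemma typed_wl_spells f L a u v : spells f L -> typed a u v -> typed (wl f a) (L ++ u) (L ++ v).
Proof. intros -> H; apply typed_wl; exact H. Qed.
Lemma typed_wr_spells f R a u v : spells f R -> typed a u v -> typed (wr a f) (u ++ R) (v ++ R).
Proof. intros -> H; apply typed_wr; exact H. Qed.

Ltac typecheck :=
  lazymatch goal with |- typed ?a _ _ =>
    lazymatch a with
    | vc _ _ => eapply typed_vc_conv; [typecheck | typecheck | reflexivity]
    | wl _ _ => eapply typed_wl_spells; [spell | typecheck]
    | wr _ _ => eapply typed_wr_spells; [spell | typecheck]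
    | _ => eassumption
    end
  end.
Ltac typecheck_conv := eapply typed_conv; [typecheck | reflexivity | reflexivity].
Ltac typed_of_cell2 H := eapply typed_conv; [eapply cell2_typed; [exact H | spell | spell] | reflexivity ..].

Lemma monad_typed mu eta : is_monad k t mu eta -> typed mu [LT;LT] [LT] /\ typed eta [] [LT].
Proof. intros (_ & _ & Cm & Ce & _); split; [typed_of_cell2 Cm | typed_of_cell2 Ce]. Qed.

Lemma emw_valuation_typed mu eta psi nu th : is_monad k t mu eta ->
  EMw_monad k t mu eta s (psi, nu, th) ->
  forall g, typed (valuation mu eta psi nu th (theta_of mu psi nu) g) (gen_dom g) (gen_cod g).
Proof.
  intros HM ((_ & _ & Cp & _) & (Cn & _) & (Ct & _) & _).
  destruct (monad_typed HM) as [Tm Te].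
  assert (Tp : typed psi [LT;LS] [LS;LT]) by typed_of_cell2 Cp.
  assert (Tn : typed nu [LS;LS] [LS;LT]) by typed_of_cell2 Cn.
  assert (Tt : typed th [] [LS;LT]) by typed_of_cell2 Ct.
  intros []; simpl; auto. unfold theta_of. typecheck_conv.
Qed.

Lemma premonad_valuation_typed mu eta Th th : is_monad k t mu eta ->
  st_premonad k t mu s (Th, th) ->
  forall g, typed (valuation mu eta (psi_of mu eta th Th) (nu_of eta Th) th Th g) (gen_dom g) (gen_cod g).
Proof.
  intros HM ((_ & _ & CT & Ct & _) & _).
  destruct (monad_typed HM) as [Tm Te].
  assert (TT : typed Th [LS;LT;LS;LT] [LS;LT]) by typed_of_cell2 CT.
  assert (Tt : typed th [] [LS;LT]) by typed_of_cell2 Ct.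
  intros []; simpl; auto; [unfold psi_of | unfold nu_of]; typecheck_conv.
Qed.

Definition premonad_of (mu : C2 K) (x : C2 K * C2 K * C2 K) : C2 K * C2 K :=
  let '(psi, nu, th) := x in (theta_of mu psi nu, th).
Definition emw_monad_of (mu eta : C2 K) (y : C2 K * C2 K) : C2 K * C2 K * C2 K :=
  let '(Th, th) := y in (psi_of mu eta th Th, nu_of eta Th, th).

Lemma premonad_of_emw_monad mu eta x : is_monad k t mu eta -> EMw_monad k t mu eta s x ->
  st_premonad k t mu s (premonad_of mu x) /\ emw_monad_of mu eta (premonad_of mu x) = x.
Proof.
  destruct x as [[psi nu] th]; intros HM HE.
  pose proof (emw_valuation_typed HM HE) as Hval.
  split; [exact (emw_to_premonad _ Hval HM HE eq_refl) |]; simpl.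
  repeat f_equal; [exact (psi_of_theta _ Hval HM HE eq_refl) | exact (nu_of_theta _ Hval HM HE eq_refl)].
Qed.

Lemma emw_monad_of_premonad mu eta y : is_monad k t mu eta -> st_premonad k t mu s y ->
  EMw_monad k t mu eta s (emw_monad_of mu eta y) /\ premonad_of mu (emw_monad_of mu eta y) = y.
Proof.
  destruct y as [Th th]; intros HM HP.
  pose proof (premonad_valuation_typed HM HP) as Hval.
  split; [exact (premonad_to_emw _ Hval HM HP eq_refl eq_refl) |]; simpl.
  f_equal; exact (theta_of_psi_nu _ Hval HM HP eq_refl eq_refl).
Qed.

End Interpretation.

Theorem theorem2p3 (K : TwoCat) (k : Ob K) (t : H1 K) (mu eta : C2 K) (s : H1 K) :
  is_monad k t mu eta -> dom K s = k -> cod K s = k ->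
  exists (F : {x : C2 K * C2 K * C2 K | EMw_monad k t mu eta s x} ->
              {y : C2 K * C2 K | st_premonad k t mu s y})
         (G : {y : C2 K * C2 K | st_premonad k t mu s y} ->
              {x : C2 K * C2 K * C2 K | EMw_monad k t mu eta s x}),
    (forall x, G (F x) = x) /\ (forall y, F (G y) = y) /\
    (forall x, snd (proj1_sig (F x)) = snd (proj1_sig x)).
Proof.
  intros HM s_dom s_cod.
  pose proof HM as (t_dom & t_cod & _).
  pose proof (@premonad_of_emw_monad K k s t s_dom s_cod t_dom t_cod mu eta) as FG.
  pose proof (@emw_monad_of_premonad K k s t s_dom s_cod t_dom t_cod mu eta) as GF.
  exists (fun x => exist _ _ (proj1 (FG _ HM (proj2_sig x)))).
  exists (fun y => exist _ _ (proj1 (GF _ HM (proj2_sig y)))).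
  split; [| split].
  - intros [x Hx]; apply subset_eq_compat, (FG _ HM Hx).
  - intros [y Hy]; apply subset_eq_compat, (GF _ HM Hy).
  - intros [[[psi nu] th] Hx]; reflexivity.
Qed.
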